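(* Let $\mathcal F$ be the set of ordered pairs of reduced fractions $\left(\frac ab,\frac cd\right)$ (with $a,c\ge 0$, $b,d\ge1$ integers) such that $0\le \frac ab<\frac cd\le 1$ and $ad-bc=-1$, and let $\mathcal F^*=\{(\frac01,\frac1n): n\in\mathbb N\}$. Then \[ \sum_{\left(\frac ab,\frac cd\right)\in\mathcal F\setminus\mathcal F^*}\frac{ab+cd+(a+c)(b+d)}{\big(abcd(a+c)(b+d)\big)^2}=7-12\gamma, \] where $\gamma$ is the Euler–Mascheroni constant.
   Context: $\mathcal F$ is the set of pairs of consecutive Farey fractions in $[0,1]$. *)

From HB Require Import structures.
From mathcomp Require Import all_boot all_order all_algebra.
From mathcomp Require Import all_classical all_reals all_analysis.
Set Implicit Arguments. Unset Strict Implicit. Unset Printing Implicit Defensive.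
Import Order.TTheory GRing.Theory Num.Theory.
Import numFieldNormedType.Exports.
Local Open Scope classical_set_scope.
Local Open Scope ring_scope.

Definition euler_gamma (R : realType) : R :=
  lim ((fun n : nat => \sum_(1 <= k < n.+1) (k%:R : R)^-1 - ln (n%:R : R)) @ \oo).

(* A quadruple (a,b,c,d) encodes the ordered pair of fractions (a/b, c/d). *)
Definition farey_pairs (R : realType) : set (nat * nat * nat * nat) :=
  [set x | let: (a, b, c, d) := x in
     (0 < b)%N /\ (0 < d)%N /\ coprime a b /\ coprime c d /\
     (0 : R) <= a%:R / b%:R /\ (a%:R / b%:R : R) < c%:R / d%:R /\
     (c%:R / d%:R : R) <= 1 /\
     (a%:Z * d%:Z - b%:Z * c%:Z = - 1)%R].

Definition farey_star : set (nat * nat * nat * nat) :=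
  [set x | exists n : nat, x = (0%N, 1%N, 1%N, n)].

Definition farey_term (R : realType) (x : nat * nat * nat * nat) : R :=
  let: (a, b, c, d) := x in
  ((a * b + c * d + (a + c) * (b + d))%:R) /
  (((a * b * c * d * (a + c) * (b + d))%:R) ^+ 2).

From HB Require Import structures.
From mathcomp Require Import all_boot all_order all_algebra.
From mathcomp Require Import all_classical all_reals all_analysis.
From mathcomp Require Import ring lra zify.
Set Implicit Arguments. Unset Strict Implicit. Unset Printing Implicit Defensive.
Import Order.TTheory GRing.Theory Num.Theory.
Import numFieldNormedType.Exports.
Local Open Scope classical_set_scope.
Local Open Scope ring_scope.

(* Every pair of F \ F* is obtained from exactly one pair (1/(n+1), 1/n) by
   repeatedly replacing (a/b, c/d) by one of its two mediant children
   (a/b, (a+c)/(b+d)) and ((a+c)/(b+d), c/d), and the level ad grows strictly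
   along the way.
   Since bc = ad + 1, the summand of (a/b, c/d) is g(ad) - g(a(b+d)) - g((a+c)d)
   for g(s) = 1/s^2 - 1/(s+1)^2 - 6/s - 6/(s+1) + 12 ln(1 + 1/s), the logarithm
   being additive from a pair to its two children.  Summing over the pairs of
   level at most N therefore telescopes to the sum of g(n) over the roots,
   n <= N, which tends to 7 - 12 gamma, minus the sum of g over the frontier of
   pairs of level > N whose parent has level <= N.  There |g(s)| is at most
   (14/N) ln(1 + 1/s), and ln(1 + 1/s) sums to ln(N + 1) over the frontier, so
   the error is O(ln N / N). *)

Lemma esum_rank_cvg (R : realType) (T : choiceType) (D : set T) (rank : T -> nat)
    (f : T -> R) (l : R) :
  (forall N, finite_set [set x | D x /\ (rank x <= N)%N]) ->
  (forall x, D x -> 0 <= f x) ->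
  (fun N => \sum_(x \in [set x | D x /\ (rank x <= N)%N]) f x) @ \oo --> l ->
  \esum_(x in D) (f x)%:E = l%:E.
Proof.
set S := fun N => [set x | D x /\ (rank x <= N)%N]; set u := fun N => \sum_(x \in S N) f x.
move=> finS f0 u_cvg.
have le_u X N : finite_set X -> X `<=` S N -> (\sum_(x \in X) (f x)%:E <= (u N)%:E)%E.
  move=> finX XS; rewrite /u -fsumEFin; last exact: finS.
  apply: lee_fsum_nneg_subset => //; first exact: finS.
    by move=> x; rewrite !inE => /XS.
  by move=> x /[!inE] /andP[_ /set_mem [Dx _]]; rewrite lee_fin f0.
have u_nd : nondecreasing_seq u.
  apply/nondecreasing_seqP => N; rewrite -lee_fin {1}/u -fsumEFin; last exact: finS.
  by apply: le_u => [|x [Dx le]]; [exact: finS | split=> //; apply: leqW].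
have u_le N : u N <= l.
  rewrite -(cvg_lim (@norm_hausdorff _ _) u_cvg).
  exact: nondecreasing_cvgn_le u_nd (cvgP _ u_cvg) N.
apply/eqP; rewrite eq_le; apply/andP; split.
  apply: ge_ereal_sup => _ [_ [/finite_fsetP[F ->] FD] <-].
  pose N := \max_(x <- finmap.enum_fset F) rank x.
  apply: le_trans (le_u _ N _ _) _ => //; last by rewrite lee_fin.
  by move=> x Fx; split; [apply: FD | apply: (@leq_bigmax_seq _ _ xpredT rank x)].
have u_esum N : ((u N)%:E <= \esum_(x in D) (f x)%:E)%E.
  apply: esum_ge; exists (S N); first by split; [exact: finS | move=> x []].
  by rewrite fsumEFin; [exact: lexx | exact: finS].
case: (\esum_(x in D) _)%E u_esum => [r | | ] u_esum.
- rewrite lee_fin -(cvg_lim (@norm_hausdorff _ _) u_cvg).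
  by apply: limr_le; [exact: cvgP u_cvg | apply: nearW => N; rewrite -lee_fin].
- exact: leey.
- by have := u_esum 0%N.
Qed.

Lemma coprime_of_mul_eq_succ x y u v : (y * u = x * v + 1)%N -> coprime x y.
Proof.
move=> e; rewrite /coprime -dvdn1.
have : (gcdn x y %| y * u)%N by apply/dvdn_mulr/dvdn_gcdr.
by rewrite e dvdn_addr // dvdn_mulr // dvdn_gcdl.
Qed.

Definition quad := (nat * nat * nat * nat)%type.

(* Coprimality and a/b < c/d follow from bc = ad + 1; a > 0 excludes F*. *)
Definition farey_node (w : quad) : Prop := let: (a, b, c, d) := w in
  [/\ (0 < a)%N, (0 < d)%N, (b * c = a * d + 1)%N & (c <= d)%N].

Definition left_child (w : quad) : quad :=
  let: (a, b, c, d) := w in (a, b, a + c, b + d)%N.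
Definition right_child (w : quad) : quad :=
  let: (a, b, c, d) := w in (a + c, b + d, c, d)%N.
Definition level (w : quad) : nat := let: (a, b, c, d) := w in (a * d)%N.
Definition root_node (n : nat) : quad := (1, n.+1, 1, n)%N.
Definition is_root (w : quad) : Prop := exists n, w = root_node n.

Lemma farey_node_pos a b c d : farey_node (a, b, c, d) -> (0 < b)%N /\ (0 < c)%N.
Proof. by case=> _ _ bc _; split; rewrite lt0n; apply/eqP=> z0; move: bc; rewrite z0; lia. Qed.

Lemma farey_node_left w : farey_node w -> farey_node (left_child w).
Proof. by case: w => [[[a b] c] d] [] /= *; split; nia. Qed.

Lemma farey_node_right w : farey_node w -> farey_node (right_child w).
Proof. by case: w => [[[a b] c] d] [] /= *; split; nia. Qed.

Lemma level_left w : farey_node w -> (level w < level (left_child w))%N.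
Proof. by case: w => [[[a b] c] d] w /=; have [b0 _] := farey_node_pos w; case: w; nia. Qed.

Lemma level_right w : farey_node w -> (level w < level (right_child w))%N.
Proof. by case: w => [[[a b] c] d] w /=; have [_ c0] := farey_node_pos w; case: w; nia. Qed.

Lemma not_root_left w : farey_node w -> ~ is_root (left_child w).
Proof.
case: w => [[[a b] c] d] w [n] /= [] *.
by have [_ c0] := farey_node_pos w; case: w; lia.
Qed.

Lemma not_root_right w : farey_node w -> ~ is_root (right_child w).
Proof.
case: w => [[[a b] c] d] w [n] /= [] *.
by have [_ c0] := farey_node_pos w; case: w; lia.
Qed.

Lemma left_child_inj : injective left_child.
Proof. by move=> [[[a b] c] d] [[[? ?] ?] ?] [] *; congr (_, _, _, _); lia. Qed.

Lemma right_child_inj : injective right_child.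
Proof. by move=> [[[a b] c] d] [[[? ?] ?] ?] [] *; congr (_, _, _, _); lia. Qed.

Lemma left_neq_right_child w w' : farey_node w -> left_child w <> right_child w'.
Proof.
case: w w' => [[[a b] c] d] [[[? ?] ?] ?] w /=.
by have [_ c0] := farey_node_pos w; case; lia.
Qed.

Lemma farey_node_childP u : farey_node u -> ~ is_root u ->
  exists2 w, farey_node w & u = left_child w \/ u = right_child w.
Proof.
case: u => [[[a b] c] d] u nr; have [b0 c0] := farey_node_pos u.
case: u nr => a0 d0 bc cd nr; have [db|bd] := ltnP d b.
- have ca : (c < a)%N.
    have : (c <= a)%N by nia.
    rewrite leq_eqVlt => /orP[/eqP ca|//]; exfalso; apply: nr.
    by exists d; rewrite /root_node; congr (_, _, _, _); nia.
  by exists (a - c, b - d, c, d)%N; [split; nia | right=> /=; congr (_, _, _, _); lia].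
- have ac : (a < c)%N by nia.
  by exists (a, b, c - a, d - b)%N; [split; nia | left=> /=; congr (_, _, _, _); nia].
Qed.

Definition nodes_upto (N : nat) : set quad :=
  [set w | farey_node w /\ (level w <= N)%N].

Definition children (A : set quad) : set quad :=
  left_child @` A `|` right_child @` A.

Definition frontier (N : nat) : set quad := children (nodes_upto N) `\` nodes_upto N.

Lemma finite_nodes_upto N : finite_set (nodes_upto N).
Proof.
apply: (@sub_finite_set _ _ (`I_N.+2 `*` `I_N.+2 `*` `I_N.+2 `*` `I_N.+2)).
  move=> [[[a b] c] d] [w le]; have [b0 c0] := farey_node_pos w.
  by case: w le => /= *; nia.
by do 3![apply: finite_setX => //]; apply: finite_II.
Qed.

Lemma finite_children A : finite_set A -> finite_set (children A).
Proof. by move=> finA; rewrite finite_setU; split; apply: finite_image. Qed.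

Lemma finite_frontier N : finite_set (frontier N).
Proof. exact/finite_setD/finite_children/finite_nodes_upto. Qed.

Lemma frontier_level_gt N w : frontier N w -> (N < level w)%N.
Proof.
move=> [w_child w_far]; rewrite ltnNge; apply/negP => le; apply: w_far; split=> //.
by case: w_child => -[v [v_node _] <-]; [apply: farey_node_left | apply: farey_node_right].
Qed.

Lemma farey_node_root n : (0 < n)%N -> farey_node (root_node n).
Proof. by move=> n0; split => //=; lia. Qed.

Lemma children_nodes_uptoI N :
  children (nodes_upto N) `&` nodes_upto N = nodes_upto N `&` ~` is_root.
Proof.
apply/seteqP; split=> [u [[] [w [w_node _] <-] [u_node le]]|u [[u_node le] nr]].
- by split=> //; apply: not_root_left.
- by split=> //; apply: not_root_right.
split=> //; have [w w_node [uw|uw]] := farey_node_childP u_node nr.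
- left; exists w => //; split=> //; apply: ltnW (leq_trans _ le).
  by rewrite uw; apply: level_left.
- right; exists w => //; split=> //; apply: ltnW (leq_trans _ le).
  by rewrite uw; apply: level_right.
Qed.

Lemma fsum_nodes_upto_telescope (V : zmodType) (phi : quad -> V) N :
  \sum_(w \in nodes_upto N) (phi w - phi (left_child w) - phi (right_child w)) =
  \sum_(w \in nodes_upto N `&` is_root) phi w - \sum_(w \in frontier N) phi w.
Proof.
have finA := finite_nodes_upto N.
have finC := finite_children finA.
have sum_children : \sum_(w \in children (nodes_upto N)) phi w =
    \sum_(w \in nodes_upto N) phi (left_child w) +
    \sum_(w \in nodes_upto N) phi (right_child w).
  rewrite fsbigU0; try exact: finite_image.
    by rewrite (fsbig_image _ _ _ (in2W left_child_inj)) (fsbig_image _ _ _ (in2W right_child_inj)).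
  by move=> _ [[w [w_node _] <-] [w' _ /esym]]; apply: left_neq_right_child.
have -> : \sum_(w \in nodes_upto N) (phi w - phi (left_child w) - phi (right_child w)) =
    \sum_(w \in nodes_upto N) phi w - \sum_(w \in nodes_upto N) phi (left_child w) -
    \sum_(w \in nodes_upto N) phi (right_child w).
  by rewrite !fsbig_finite // -!sumrB.
rewrite -addrA -opprD -sum_children.
rewrite (fsbigID is_root (nodes_upto N)) // (fsbigID (nodes_upto N) (children _)) //.
by rewrite children_nodes_uptoI /= addrKA.
Qed.

Lemma fsum_nodes_upto_root (V : zmodType) (phi : quad -> V) N :
  \sum_(w \in nodes_upto N `&` is_root) phi w = \sum_(1 <= n < N.+1) phi (root_node n).
Proof.
have -> : nodes_upto N `&` is_root = [set` map root_node (index_iota 1 N.+1)].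
  apply/seteqP; split=> [w [[w_node le] [n wn]]|w /mapP[n]].
    apply/mapP; exists n => //; rewrite mem_index_iota.
    by move: w_node le; rewrite wn /= mul1n => -[_ n0 _ _] nN; lia.
  rewrite mem_index_iota => /andP[n0 nN] ->.
  by split; [split; [apply: farey_node_root|rewrite /= mul1n -ltnS] | exists n].
rewrite -fsbig_seq ?big_map // map_inj_uniq ?iota_uniq //.
by move=> m n [].
Qed.

Section Potential.
Variable R : realType.

Definition ln1pV (x : R) : R := ln (1 + x^-1).

Definition potential (x : R) : R :=
  (x ^+ 2)^-1 - ((x + 1) ^+ 2)^-1 - 6 / x - 6 / (x + 1) + 12 * ln1pV x.

Lemma ln1pV_bounds (x : R) : 0 < x -> (x + 1)^-1 <= ln1pV x <= x^-1.
Proof.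
move=> x0; have x1 : 0 < x + 1 by rewrite addr_gt0.
rewrite /ln1pV; apply/andP; split; last first.
  by apply: le_ln1Dx; apply: lt_le_trans (ltrN10 R) _; rewrite invr_ge0 ltW.
have -> : 1 + x^-1 = (1 - (x + 1)^-1)^-1.
  by field; rewrite addrK !gt_eqF.
have y1 : (x + 1)^-1 < 1 by rewrite invf_lt1 // ltrDr.
rewrite lnV ?posrE ?subr_gt0 // lerNr.
by apply: le_ln1Dx; rewrite ltrN2.
Qed.

Lemma ln1pV_mediant (a b c d : R) : 0 < a -> 0 < b -> 0 < d -> b * c = a * d + 1 ->
  ln1pV (a * d) = ln1pV (a * (b + d)) + ln1pV ((a + c) * d).
Proof.
move=> a0 b0 d0 bc; have ad1 : 0 < a * d + 1 by rewrite addr_gt0 ?mulr_gt0.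
have c0 : 0 < c by rewrite -(pmulr_rgt0 _ b0) bc.
have pos y : 0 < y -> 1 + y^-1 \is Num.pos by move=> y0; rewrite posrE addr_gt0 ?invr_gt0.
rewrite /ln1pV -lnM ?pos ?mulr_gt0 ?addr_gt0 //; congr ln.
have -> : c = (a * d + 1) / b by rewrite -bc mulrC mulKf ?gt_eqF.
by field; rewrite !gt_eqF ?addr_gt0 ?mulr_gt0.
Qed.

Lemma farey_term_potential (a b c d : R) : 0 < a -> 0 < b -> 0 < d -> b * c = a * d + 1 ->
  (a * b + c * d + (a + c) * (b + d)) / (a * b * c * d * (a + c) * (b + d)) ^+ 2 =
  potential (a * d) - potential (a * (b + d)) - potential ((a + c) * d).
Proof.
move=> a0 b0 d0 bc; rewrite /potential (ln1pV_mediant a0 b0 d0 bc).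
have -> : c = (a * d + 1) / b by rewrite -bc mulrC mulKf ?gt_eqF.
have ab1 : 0 < a * b + (a * d + 1) by rewrite !addr_gt0 ?mulr_gt0.
by field; rewrite !gt_eqF ?addr_gt0 ?mulr_gt0.
Qed.

Lemma norm_potential_le (x : R) : 0 < x -> `|potential x| <= 7 / x ^+ 2.
Proof.
move=> x0; have x1 : 0 < x + 1 by rewrite addr_gt0.
rewrite /potential -!exprVn; set X := x^-1; set Y := (x + 1)^-1.
have /andP[lo hi] := ln1pV_bounds x0; rewrite -/X -/Y in lo hi.
move: (ln1pV x) lo hi => h lo hi.
have X0 : 0 < X by rewrite invr_gt0.
have Y0 : 0 < Y by rewrite invr_gt0.
have XY : X - Y = X * Y by rewrite /X /Y; field; rewrite !gt_eqF.
have YX : Y <= X by rewrite -subr_ge0 XY mulr_ge0 // ltW.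
have XYX : X * Y <= X * X by rewrite ler_pM2l.
have YYX : Y * Y <= X * X by rewrite ler_pM // ltW.
have YY0 : 0 <= Y * Y by rewrite mulr_ge0 // ltW.
rewrite ler_norml !expr2; move: (X * X) (Y * Y) (X * Y) XY XYX YYX YY0 => q r p.
by move=> *; apply/andP; split; lra.
Qed.

Lemma norm_potential_le_ln1pV (N x : R) : 1 <= N -> N <= x ->
  `|potential x| <= 14 / N * ln1pV x.
Proof.
move=> N1 Nx; have N0 : 0 < N by apply: lt_le_trans N1.
have x1 : 1 <= x by apply: le_trans Nx.
have x0 : 0 < x by apply: lt_le_trans x1.
have /andP[lo _] := ln1pV_bounds x0.
have xV_N : x^-1 <= N^-1 by rewrite lef_pV2 ?posrE.
have xV_ln : x^-1 <= 2 * ln1pV x.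
  apply: le_trans (_ : 2 * (x + 1)^-1 <= _); last by rewrite ler_pM2l.
  rewrite -subr_ge0 (_ : _ - _ = (x - 1) / (x * (x + 1))); last by field; rewrite !gt_eqF ?addr_gt0.
  by rewrite divr_ge0 ?subr_ge0 // mulr_ge0 // ltW // addr_gt0.
have xV0 : 0 <= x^-1 by rewrite invr_ge0 ltW.
apply: le_trans (norm_potential_le x0) _.
rewrite -exprVn expr2 (_ : 14 / N * _ = 7 * (N^-1 * (2 * ln1pV x))); last by ring.
by rewrite ler_pM2l // ler_pM.
Qed.
End Potential.

Section EulerGamma.
Variable R : realType.

Definition euler_gamma_seq (n : nat) : R :=
  \sum_(1 <= k < n.+1) (k%:R : R)^-1 - ln (n%:R : R).

Lemma lnS_ln1pV n : ln (n.+2%:R : R) = ln n.+1%:R + ln1pV n.+1%:R.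
Proof.
rewrite /ln1pV -lnM ?posrE ?addr_gt0 ?invr_gt0 ?ltr0n //.
by rewrite mulrDr mulr1 divff ?pnatr_eq0 // natr1.
Qed.

Lemma sum_ln1pV n : \sum_(1 <= k < n.+1) ln1pV k%:R = ln (n.+1%:R : R).
Proof.
elim: n => [|n IH]; first by rewrite big_geq // ln1.
by rewrite big_nat_recr //= IH lnS_ln1pV.
Qed.

Lemma ln_le_harmonic n : ln (n.+1%:R : R) <= \sum_(1 <= k < n.+1) (k%:R : R)^-1.
Proof.
rewrite -sum_ln1pV; apply: ler_sum_nat => k /andP[k1 _].
have k0 : 0 < k%:R :> R by rewrite ltr0n.
by have /andP[] := ln1pV_bounds k0.
Qed.

Lemma euler_gamma_seqS n :
  euler_gamma_seq n.+2 = euler_gamma_seq n.+1 + n.+2%:R^-1 - ln1pV n.+1%:R.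
Proof. by rewrite /euler_gamma_seq big_nat_recr //= lnS_ln1pV; ring. Qed.

Lemma euler_gamma_seq_ge0 n : 0 <= euler_gamma_seq n.+1.
Proof.
rewrite /euler_gamma_seq subr_ge0 big_nat_recr //=.
by apply: le_trans (ln_le_harmonic n) _; rewrite lerDl invr_ge0.
Qed.

Lemma euler_gamma_seq_nonincreasing n : euler_gamma_seq n.+2 <= euler_gamma_seq n.+1.
Proof.
have n0 : 0 < n.+1%:R :> R by rewrite ltr0n.
have /andP[lo _] := ln1pV_bounds n0.
by rewrite euler_gamma_seqS -natr1 lerBlDr lerD2l.
Qed.

Lemma euler_gamma_seq_cvg : euler_gamma_seq @ \oo --> euler_gamma R.
Proof.
have nonincr : nonincreasing_seq (fun n => euler_gamma_seq n.+1).
  by apply/nonincreasing_seqP => n; apply: euler_gamma_seq_nonincreasing.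
have lb : has_lbound (range (fun n => euler_gamma_seq n.+1)).
  by exists 0 => _ [n _ <-]; apply: euler_gamma_seq_ge0.
have cvg_inf := nonincreasing_cvgn nonincr lb; rewrite cvg_shiftS in cvg_inf.
exact: cvgP cvg_inf.
Qed.

Lemma sum_potential n : \sum_(1 <= k < n.+1) potential k%:R =
  7 - (n.+1%:R ^+ 2)^-1 + 6 / n.+1%:R - 12 * euler_gamma_seq n.+1.
Proof.
elim: n => [|n IH].
  by rewrite big_geq // /euler_gamma_seq big_nat1 ln1 invr1 expr1n invr1; lra.
rewrite big_nat_recr //= IH euler_gamma_seqS /potential natr1 -!exprVn.
by move: (euler_gamma_seq _) (ln1pV _) (n.+1%:R^-1) (n.+2%:R^-1) => g h x y; ring.
Qed.

Lemma sum_potential_cvg :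
  (fun n => \sum_(1 <= k < n.+1) potential k%:R) @ \oo --> 7 - 12 * euler_gamma R.
Proof.
have -> : (fun n => \sum_(1 <= k < n.+1) potential k%:R) =
    (fun n => 7 - harmonic n * harmonic n + 6 * harmonic n - 12 * euler_gamma_seq n.+1).
  by apply: funext => n; rewrite sum_potential -expr2 exprVn.
have gamma_cvg : (fun n => euler_gamma_seq n.+1) @ \oo --> euler_gamma R.
  by rewrite cvg_shiftS; apply: euler_gamma_seq_cvg.
have -> : 7 - 12 * euler_gamma R = 7 - 0 * 0 + 6 * 0 - 12 * euler_gamma R.
  by rewrite mul0r mulr0 subr0 addr0.
apply: cvgB; last exact: cvgM (cvg_cst _) gamma_cvg.
apply: cvgD; last exact: cvgM (cvg_cst _) cvg_harmonic.
by apply: cvgB; [exact: cvg_cst | exact: cvgM cvg_harmonic cvg_harmonic].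
Qed.
End EulerGamma.

Section FareyPartialSums.
Variable R : realType.

Lemma farey_term_node w : farey_node w ->
  farey_term R w = potential (level w)%:R - potential (level (left_child w))%:R -
    potential (level (right_child w))%:R.
Proof.
case: w => [[[a b] c] d] w; have [b0 _] := farey_node_pos w; case: w => a0 d0 bc _.
rewrite /farey_term /= !(natrM, natrD); apply: farey_term_potential; rewrite ?ltr0n //.
by rewrite -!natrM bc natrD.
Qed.

Lemma ln1pV_node w : farey_node w ->
  ln1pV (level w)%:R = ln1pV (level (left_child w))%:R + ln1pV (level (right_child w))%:R :> R.
Proof.
case: w => [[[a b] c] d] w; have [b0 _] := farey_node_pos w; case: w => a0 d0 bc _.
rewrite /= !(natrM, natrD); apply: ln1pV_mediant; rewrite ?ltr0n //.
by rewrite -!natrM bc natrD.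
Qed.

Lemma fsum_nodes_upto_farey_term N :
  \sum_(w \in nodes_upto N) farey_term R w =
  \sum_(1 <= n < N.+1) potential (n%:R : R) - \sum_(w \in frontier N) potential ((level w)%:R : R).
Proof.
rewrite (eq_fsbigr (fun w => potential (level w)%:R - potential (level (left_child w))%:R -
    potential (level (right_child w))%:R : R)); last by move=> w /set_mem [/farey_term_node].
rewrite fsum_nodes_upto_telescope fsum_nodes_upto_root.
by congr (_ - _); apply: eq_bigr => n _; rewrite /= mul1n.
Qed.

Lemma fsum_frontier_ln1pV N :
  \sum_(w \in frontier N) ln1pV ((level w)%:R : R) = ln N.+1%:R.
Proof.
have := fsum_nodes_upto_telescope (fun w => ln1pV (level w)%:R : R) N.
rewrite fsbig1 => [|w [/ln1pV_node ->]]; last by rewrite addrAC addrK subrr.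
rewrite fsum_nodes_upto_root => /eqP; rewrite eq_sym subr_eq0 => /eqP <-.
by rewrite -sum_ln1pV; apply: eq_bigr => n _; rewrite /= mul1n.
Qed.

Lemma norm_fsum_frontier_le N : (0 < N)%N ->
  `|\sum_(w \in frontier N) potential ((level w)%:R : R)| <= 14 / N%:R * ln N.+1%:R.
Proof.
move=> N0; have finF := finite_frontier N.
rewrite -fsum_frontier_ln1pV mulr_fsumr !fsbig_finite //=.
apply: le_trans (ler_norm_sum _ _ _) _; rewrite big_seq [leRHS]big_seq.
apply: ler_sum => w.
rewrite in_fset_set // inE => /frontier_level_gt Nw.
by apply: norm_potential_le_ln1pV; rewrite ?ler1n // ler_nat ltnW.
Qed.

Lemma fsum_frontier_cvg0 :
  (fun N => \sum_(w \in frontier N) potential ((level w)%:R : R)) @ \oo --> 0.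
Proof.
rewrite -cvg_shiftS; apply: norm_cvg0.
(* [harmonic n] is 1/(n+1), so [arithmetic_mean harmonic N] is H_(N+1)/(N+1). *)
apply: (@squeeze_cvgr _ _ _ _ (cst 0) (fun N => 14 * arithmetic_mean harmonic N)).
- apply: nearW => N; rewrite normr_ge0 /=.
  apply: le_trans (norm_fsum_frontier_le (ltn0Sn N)) _.
  rewrite /arithmetic_mean /= mulrA ler_pM2l // /series /=.
  by rewrite (le_trans (ln_le_harmonic R N.+1)) // big_add1.
- exact: cvg_cst.
- by rewrite -(mulr0 14); apply: cvgM (cvg_cst _) (cesaro cvg_harmonic).
Qed.

Lemma fsum_nodes_upto_cvg :
  (fun N => \sum_(w \in nodes_upto N) farey_term R w) @ \oo --> 7 - 12 * euler_gamma R.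
Proof.
rewrite (eq_fun fsum_nodes_upto_farey_term).
by have := cvgB (@sum_potential_cvg R) fsum_frontier_cvg0; rewrite subr0; apply.
Qed.
End FareyPartialSums.

Lemma farey_pairs_setD_star (R : realType) : farey_pairs R `\` farey_star = farey_node.
Proof.
apply/seteqP; split=> [[[[a b] c] d]|[[[a b] c] d] w] /=.
- move=> [[b0 [d0 [_ [_ [_ [_ [cd1 bc]]]]]]] not_star].
  have {}bc : (b * c = a * d + 1)%N by lia.
  split=> //; last by move: cd1; rewrite ler_pdivrMr ?ltr0n // mul1r ler_nat.
  rewrite lt0n; apply/eqP => a0; apply: not_star; exists d.
  by move: bc; rewrite a0 => /eqP; rewrite muln_eq1 => /andP[/eqP -> /eqP ->].
- have [b0 c0] := farey_node_pos w; case: w => a0 d0 bc cd.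
  split; last by move=> [n [a0']]; move: a0; rewrite a0'.
  split=> //; split=> //; split; first exact: coprime_of_mul_eq_succ bc.
  split; first by rewrite coprime_sym (@coprime_of_mul_eq_succ _ _ b a) // mulnC bc mulnC.
  split; first by rewrite divr_ge0.
  split.
    rewrite ltr_pdivrMr ?ltr0n // mulrAC ltr_pdivlMr ?ltr0n // -!natrM ltr_nat.
    by rewrite (mulnC c b) bc addn1.
  by split; [rewrite ler_pdivrMr ?ltr0n // mul1r ler_nat | lia].
Qed.

Lemma farey_term_ge0 (R : realType) w : 0 <= farey_term R w.
Proof. by case: w => [[[a b] c] d]; rewrite /farey_term divr_ge0 // exprn_ge0. Qed.

Theorem theorem13 (R : realType) :
  (\esum_(x in farey_pairs R `\` farey_star) (farey_term R x)%:E)%E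
  = ((7 : R) - 12 * euler_gamma R)%:E.
Proof.
rewrite farey_pairs_setD_star; apply: (@esum_rank_cvg _ _ _ level).
- exact: finite_nodes_upto.
- by move=> w _; apply: farey_term_ge0.
- exact: fsum_nodes_upto_cvg.
Qed.
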